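(* Every absolutely summable subset of an abelian Hausdorff topological group is absolutely Cauchy summable. Conversely, in a complete abelian Hausdorff topological group every absolutely Cauchy summable subset is absolutely summable.
   Context: A subset $A$ of a topological group $G$ is absolutely summable if for every family $\{z_a:a\in A\}$ of integers there is $g\in G$ such that for every neighbourhood $U$ of $0$ there is a finite $F\subseteq A$ with $g-\sum_{a\in E}z_aa\in U$ for every finite $E\subseteq A$ containing $F$. $A$ is absolutely Cauchy summable if for every neighbourhood $U$ of $0$ there is a finite $F\subseteq A$ such that the subgroup generated by $A\setminus F$ is contained in $U$. *)

From HB Require Import structures.
From mathcomp Require Import all_boot all_order all_algebra.
From mathcomp Require Import all_classical all_reals all_analysis.
Set Implicit Arguments. Unset Strict Implicit. Unset Printing Implicit Defensive.
Import Order.TTheory GRing.Theory Num.Theory.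
Local Open Scope classical_set_scope.
Local Open Scope ring_scope.

(* Abelian topological groups are [topologicalZmodType]s (additive notation).
   "Neighbourhood of 0" is [nbhs 0]. *)

Definition is_subgroup (G : zmodType) (H : set G) : Prop :=
  H 0 /\ (forall x y, H x -> H y -> H (x - y)).

Definition subgroup_gen (G : zmodType) (S : set G) : set G :=
  [set x | forall H : set G, is_subgroup H -> S `<=` H -> H x].

Definition abs_summable (G : topologicalZmodType) (A : set G) : Prop :=
  forall z : G -> int, exists g : G,
    forall U : set G, nbhs (0 : G) U ->
      exists2 F : set G, finite_set F /\ F `<=` A &
        forall E : set G, finite_set E -> F `<=` E -> E `<=` A ->
          U (g - \sum_(a \in E) (a *~ z a)).

Definition abs_cauchy_summable (G : topologicalZmodType) (A : set G) : Prop :=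
  forall U : set G, nbhs (0 : G) U ->
    exists2 F : set G, finite_set F /\ F `<=` A &
      subgroup_gen (A `\` F) `<=` U.

(* Completeness of an abelian topological group (w.r.t. its group uniformity):
   every proper filter that is Cauchy in the group sense converges. *)
Definition group_cauchy (G : topologicalZmodType) (F : set_system G) : Prop :=
  forall U : set G, nbhs (0 : G) U ->
    exists2 B : set G, F B & forall x y, B x -> B y -> U (x - y).

Definition group_complete (G : topologicalZmodType) : Prop :=
  forall F : set_system G, ProperFilter F -> group_cauchy F ->
    exists g : G, F --> g.

From HB Require Import structures.
From mathcomp Require Import all_boot all_order all_algebra.
From mathcomp Require Import all_classical all_reals all_analysis.
Import GRing.Theory.
Set Implicit Arguments. Unset Strict Implicit. Unset Printing Implicit Defensive.
Local Open Scope classical_set_scope.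
Local Open Scope ring_scope.

(* If A is absolutely summable but some neighbourhood U of 0 contains the
   subgroup generated by no cofinite part of A, then outside every finite part
   of A there is a finite integer combination escaping U.  Iterating yields
   pairwise disjoint finite blocks of A with coefficients escaping U; glued
   into one family z, they contradict the Cauchy property of the partial sums
   of z, since every finite set misses some block.  Conversely, absolute Cauchy
   summability makes the filter of finite partial sums a Cauchy filter, and in
   a complete group its limit is the sum. *)

Section Subgroup.
Variables (G : zmodType) (H : set G).
Hypothesis subH : is_subgroup H.

Lemma subgroup0 : H 0. Proof. by case: subH. Qed.

Lemma subgroupB x y : H x -> H y -> H (x - y). Proof. by case: subH => _; apply. Qed.

Lemma subgroupN x : H x -> H (- x).
Proof. by move=> Hx; rewrite -sub0r; apply: subgroupB subgroup0 Hx. Qed.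

Lemma subgroupD x y : H x -> H y -> H (x + y).
Proof. by move=> Hx Hy; rewrite -[y]opprK; apply/subgroupB/subgroupN. Qed.

Lemma subgroupMz x n : H x -> H (x *~ n).
Proof.
move=> Hx; suff HMn m : H (x *+ m) by case: n => m; [exact: HMn|exact/subgroupN/HMn].
by elim: m => [|m IHm]; [rewrite mulr0n; exact: subgroup0|rewrite mulrS; exact: subgroupD].
Qed.

Lemma subgroup_fsbig (I : choiceType) (P : set I) (f : I -> G) :
  finite_set P -> (forall i, P i -> H (f i)) -> H (\sum_(i \in P) f i).
Proof.
move=> finP Hf; rewrite fsbig_finite //= big_seq.
apply: (big_ind H) => [|x y|i]; [exact: subgroup0|exact: subgroupD|].
by rewrite in_fset_set // inE => /Hf.
Qed.

End Subgroup.

Definition zsum (G : zmodType) (c : G -> int) (E : set G) : G := \sum_(a \in E) a *~ c a.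

Lemma zsumU (G : zmodType) (c : G -> int) (E F : set G) :
  finite_set E -> finite_set F -> E `&` F `<=` set0 ->
  zsum c (E `|` F) = zsum c E + zsum c F.
Proof. exact: fsbigU0. Qed.

Lemma zsum_widen (G : zmodType) (c : G -> int) (E D : set G) :
  E `<=` D -> zsum c E = zsum (fun a => if a \in E then c a else 0) D.
Proof.
move=> ED; rewrite /zsum -(fsbig_widen E D) => [|//|a [_ nEa]].
  by apply: eq_fsbigr => a ->.
by rewrite /preimage /= memNset // mulr0z.
Qed.

Lemma subgroup_gen_subgroup (G : zmodType) (S : set G) : is_subgroup (subgroup_gen S).
Proof.
split=> [H [] //|x y Sx Sy H subH SH].
by apply: subgroupB => //; [apply: Sx|apply: Sy].
Qed.

Lemma sub_subgroup_gen (G : zmodType) (S : set G) : S `<=` subgroup_gen S.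
Proof. by move=> x Sx H _; apply. Qed.

Lemma zsum_subgroup_gen (G : zmodType) (S E : set G) (c : G -> int) :
  finite_set E -> E `<=` S -> subgroup_gen S (zsum c E).
Proof.
have subS := subgroup_gen_subgroup S.
move=> finE ES; apply: (subgroup_fsbig subS finE) => a Ea.
by apply: (subgroupMz subS); apply: sub_subgroup_gen; apply: ES.
Qed.

Definition zcombinations (G : zmodType) (S : set G) : set G :=
  [set x | exists2 E, finite_set E /\ E `<=` S & exists c, x = zsum c E].

Lemma zcombinations_subgroup (G : zmodType) (S : set G) : is_subgroup (zcombinations S).
Proof.
split.
  by exists set0; [split; [exact: finite_set0|]|exists (fun=> 0); rewrite /zsum fsbig_set0].
move=> _ _ [E [finE ES] [c ->]] [F [finF FS] [d ->]].
exists (E `|` F); first by split; [rewrite finite_setU|move=> x [/ES|/FS]].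
exists (fun a => (if a \in E then c a else 0) - (if a \in F then d a else 0)).
rewrite (zsum_widen c (@subsetUl _ E F)).
rewrite (zsum_widen d (@subsetUr _ E F)).
rewrite /zsum !fsbig_finite ?finite_setU //= -sumrN -big_split /=.
by apply: eq_bigr => a _; rewrite mulrzBr.
Qed.

Lemma subgroup_genP (G : zmodType) (S : set G) x :
  subgroup_gen S x <-> zcombinations S x.
Proof.
split=> [|[E [finE ES] [c ->]]]; last exact: zsum_subgroup_gen.
apply; first exact: zcombinations_subgroup.
move=> a Sa; exists [set a]; first by split; [exact: finite_set1|move=> _ ->].
by exists (fun=> 1); rewrite /zsum fsbig_set1 mulr1z.
Qed.

Lemma trivIset_seq_outside_finite (T : Type) (A : set T) (P : set T -> Prop) :
  (forall F, finite_set F -> F `<=` A ->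
     exists2 E, finite_set E /\ E `<=` A `\` F & P E) ->
  exists2 B : nat -> set T, trivIset setT B &
    forall n, [/\ finite_set (B n), B n `<=` A & P (B n)].
Proof.
move=> outside.
have /choice [next nextP] : forall F, exists E, finite_set F -> F `<=` A ->
    [/\ finite_set E, E `<=` A `\` F & P E].
  move=> F.
  have [[finF FA]|] := pselect (finite_set F /\ F `<=` A); last first.
    by move=> notFA; exists set0 => finF FA; case: notFA.
  by have [E [finE EAF] PE] := outside F finF FA; exists E.
pose fix before n := if n is m.+1 then before m `|` next (before m) else set0.
have beforeP n : finite_set (before n) /\ before n `<=` A.
  elim: n => [|n [finF FA]] /=; first by split; [exact: finite_set0|].
  have [finE EAF _] := nextP _ finF FA.
  by split; [rewrite finite_setU|move=> x [/FA|/EAF []]].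
have nextB n := nextP _ (beforeP n).1 (beforeP n).2.
have before_mono m n : (m < n)%N -> next (before m) `<=` before n.
  elim: n => // n IHn; rewrite ltnS leq_eqVlt => /orP[/eqP-> x|/IHn sub x /sub]; by [right|left].
exists (fun n => next (before n)) => [|n]; last first.
  by have [finE EAF PE] := nextB n; split=> // x /EAF [].
apply: ltn_trivIset => n m ltmn; apply/seteqP; split=> // x [Bm Bn].
by have [_ /(_ x Bn) [_] /(_ (before_mono _ _ ltmn x Bm))] := nextB n.
Qed.

Lemma trivIset_glue (T R : Type) (B : nat -> set T) (C : nat -> T -> R) :
  trivIset setT B -> exists f : T -> R, forall n a, B n a -> f a = C n a.
Proof.
move=> trivB.
exists (fun a => if pselect (exists n, B n a) is left ex
  then C (projT1 (cid ex)) a else C 0%N a).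
move=> n a Bna; case: pselect => [ex|[]]; last by exists n.
by case: cid => m /= Bma; rewrite (trivB m n) //; exists a.
Qed.

Lemma finite_set_trivIset_disjoint (T : Type) (F : set T) (B : nat -> set T) :
  finite_set F -> trivIset setT B -> exists n, F `&` B n = set0.
Proof.
move=> finF trivB; apply: contrapT => meets.
have /choice [f fP] : forall n, exists a, F a /\ B n a.
  move=> n; apply: contrapT => /forallNP noa; apply: meets; exists n.
  by apply/seteqP; split=> // a [Fa Bna]; apply: (noa a).
apply: infinite_nat; suff <- : f @^-1` F = setT.
  apply: finite_preimage => // m n _ _ fmn.
  by apply: (trivB m n) => //; exists (f m); split; [case: (fP m)|rewrite fmn; case: (fP n)].
by apply/seteqP; split=> // n _; case: (fP n).
Qed.

Lemma nbhs_sub (G : topologicalZmodType) (x y : G) (U : set G) :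
  nbhs (x - y) U -> exists2 V, nbhs x V & exists2 W, nbhs y W &
    forall a b, V a -> W b -> U (a - b).
Proof.
move=> /(@sub_continuous G (x, y)) [[V W] /= [Vx Wy] VWU].
by exists V => //; exists W => // a b Va Wb; apply: (VWU (a, b)).
Qed.

Lemma abs_summable_cauchy (G : topologicalZmodType) (A : set G) (z : G -> int) :
  abs_summable A -> forall U, nbhs (0 : G) U ->
    exists2 F, finite_set F /\ F `<=` A &
      forall E, finite_set E -> E `<=` A `\` F -> U (zsum z E).
Proof.
move=> /(_ z) [g sum_g] U; rewrite -[X in nbhs X](subr0 0) => /nbhs_sub.
move=> [V V0 [W W0 VWU]].
have [F [finF FA] FP] := sum_g _ (filterI V0 W0).
exists F => // E finE EAF.
have finFE : finite_set (F `|` E) by rewrite finite_setU.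
have FEA : F `|` E `<=` A by move=> x [/FA|/EAF []].
have [VF _] := FP F finF (@subset_refl _ _) FA.
have [_ WFE] := FP _ finFE (@subsetUl _ F E) FEA.
have := VWU _ _ VF WFE; rewrite -/(zsum z F) -/(zsum z (F `|` E)).
rewrite zsumU // => [|x [Fx /EAF []]//].
by rewrite opprB addrC addrA subrK addrC addKr.
Qed.

Lemma abs_summable_abs_cauchy_summable (G : topologicalZmodType) (A : set G) :
  abs_summable A -> abs_cauchy_summable A.
Proof.
move=> sumA U U0; apply: contrapT => not_cauchy.
have [B trivB BP] : exists2 B : nat -> set G, trivIset setT B &
    forall n, [/\ finite_set (B n), B n `<=` A & exists c, ~ U (zsum c (B n))].
  apply: (trivIset_seq_outside_finite (P := fun E => exists c, ~ U (zsum c E))).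
  move=> F finF FA.
  have /existsNP [x /not_implyP [/subgroup_genP [E EAF [c ->]] notU]] :
      ~ subgroup_gen (A `\` F) `<=` U by move=> genU; apply: not_cauchy; exists F.
  by exists E => //; exists c.
have /choice [C CP] n : exists c, ~ U (zsum c (B n)) by case: (BP n).
have [z zP] := trivIset_glue C trivB.
have [F [finF FA] small] := abs_summable_cauchy z sumA U0.
have [n FBn] := finite_set_trivIset_disjoint finF trivB.
have [finBn BnA _] := BP n.
apply: (CP n); have -> : zsum (C n) (B n) = zsum z (B n).
  by apply: eq_fsbigr => a /set_mem/zP ->.
apply: small => // a Bna; split; first exact: BnA.
by move=> Fa; suff : (F `&` B n) a by rewrite FBn.
Qed.

Definition partial_sums (G : zmodType) (z : G -> int) (A : set G) : set_system G :=
  [set P | exists2 F, finite_set F /\ F `<=` A &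
     forall E, finite_set E -> F `<=` E -> E `<=` A -> P (zsum z E)].

Lemma partial_sums_proper_filter (G : zmodType) (z : G -> int) (A : set G) :
  ProperFilter (partial_sums z A).
Proof.
split; first by move=> [F [finF FA] FP]; apply: (FP F).
split.
- by exists set0; [split; [exact: finite_set0|]|].
- move=> P Q [F [finF FA] FP] [F' [finF' F'A] F'P].
  exists (F `|` F'); first by split; [rewrite finite_setU|move=> x [/FA|/F'A]].
  by move=> E finE FE EA; split; [apply: FP|apply: F'P] => // x Fx; apply: FE; [left|right].
- by move=> P Q PQ [F FA FP]; exists F => // E finE FE EA; apply: PQ; apply: FP.
Qed.

Lemma abs_cauchy_summable_partial_sums (G : topologicalZmodType) (z : G -> int) (A : set G) :
  abs_cauchy_summable A -> group_cauchy (partial_sums z A).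
Proof.
move=> cauchyA U U0; have [F [finF FA] genU] := cauchyA U U0.
exists [set x | exists E, [/\ finite_set E, F `<=` E, E `<=` A & x = zsum z E]].
  by exists F => // E finE FE EA; exists E.
have split_zsum E : finite_set E -> F `<=` E -> zsum z E = zsum z F + zsum z (E `\` F).
  move=> finE FE; rewrite -zsumU.
  - by rewrite setDUK.
  - exact: sub_finite_set finE.
  - exact: finite_setD.
  - by move=> x [? []].
move=> _ _ [E [finE FE EA ->]] [E' [finE' FE' E'A ->]].
rewrite (split_zsum E) // (split_zsum E') // opprD addrACA subrr add0r; apply: genU.
apply: (subgroupB (subgroup_gen_subgroup _)); apply: zsum_subgroup_gen.
- exact: finite_setD.
- by move=> x [Ex nFx]; split; [apply: EA|].
- exact: finite_setD.
- by move=> x [Ex nFx]; split; [apply: E'A|].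
Qed.

Lemma partial_sums_cvg (G : topologicalZmodType) (z : G -> int) (A : set G) (g : G) :
  partial_sums z A --> g -> forall U, nbhs (0 : G) U ->
    exists2 F, finite_set F /\ F `<=` A &
      forall E, finite_set E -> F `<=` E -> E `<=` A -> U (g - zsum z E).
Proof.
move=> cvg_g U; rewrite -(subrr g) => /nbhs_sub [V Vg [W Wg VWU]].
have [F FA FP] := cvg_g _ Wg.
by exists F => // E finE FE EA; apply: VWU (nbhs_singleton Vg) (FP E finE FE EA).
Qed.

Lemma abs_cauchy_summable_abs_summable (G : topologicalZmodType) (A : set G) :
  group_complete G -> abs_cauchy_summable A -> abs_summable A.
Proof.
move=> complG cauchyA z.
have [g cvg_g] := complG _ (partial_sums_proper_filter z A)
  (abs_cauchy_summable_partial_sums z cauchyA).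
by exists g; apply: partial_sums_cvg.
Qed.

Theorem proposition6p5 :
  (forall (G : topologicalZmodType), hausdorff_space G ->
     forall A : set G, abs_summable A -> abs_cauchy_summable A) /\
  (forall (G : topologicalZmodType), hausdorff_space G -> group_complete G ->
     forall A : set G, abs_cauchy_summable A -> abs_summable A).
Proof.
split=> [G _ A|G _ complG A]; first exact: abs_summable_abs_cauchy_summable.
exact: abs_cauchy_summable_abs_summable.
Qed.
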